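(* Let $k\ge 0$ and let $P_{4k+3}$ be the path with vertices labeled $1,2,\dots,4k+3$ consecutively. Then $\tau(P_{4k+3})=k+2$, and for each vertex $v$, writing $v=4q+r$ with $0\le r<4$, $$TDV(v)=\begin{cases}0 & \text{if } v\equiv 0 \pmod 4,\\ q+1 & \text{if } v\equiv 1 \pmod 4,\\ k+2 & \text{if } v\equiv 2 \pmod 4,\\ k+1-q & \text{if } v\equiv 3 \pmod 4.\end{cases}$$
   Context: A set $D \subseteq V(G)$ is a total dominating set of a graph $G$ if every vertex of $G$ has a neighbor in $D$. $\gamma_t(G)$ is the minimum cardinality of a total dominating set; a minimum one is a $\gamma_t(G)$-set. $\tau(G)$ is the number of $\gamma_t(G)$-sets and $TDV(v)$ is the number of $\gamma_t(P_{4k+3})$-sets containing $v$. *)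

From mathcomp Require Import all_boot.
Set Implicit Arguments. Unset Strict Implicit. Unset Printing Implicit Defensive.

(* The path P_n on vertex type 'I_n; ordinal i represents vertex label i+1.
   Two vertices are adjacent iff their labels differ by exactly 1. *)
Definition path_adj (n : nat) : rel 'I_n :=
  fun i j => (i.+1 == j :> nat) || (j.+1 == i :> nat).
Arguments path_adj n : clear implicits.

Section TD.
Variable (T : finType) (adj : rel T).

Definition total_dominating (D : {set T}) : bool :=
  [forall v, [exists u in D, adj v u]].

Definition min_tds (D : {set T}) : bool :=
  total_dominating D && [forall E : {set T}, total_dominating E ==> (#|D| <= #|E|)].

Definition tau : nat := #|[set D : {set T} | min_tds D]|.

Definition TDV (v : T) : nat := #|[set D : {set T} | min_tds D && (v \in D)]|.
End TD.

From mathcomp Require Import all_boot zify.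

(* Index the vertices 0, ..., 4k+2.  Vertex 4j+1 is dominated only by 4j and
   4j+2, vertex 4j+2 only by 4j+1 and 4j+3 (the index 4k+3 being absent); these
   2k+2 neighbourhoods are disjoint, so gamma_t >= 2k+2 and a gamma_t-set meets
   each of them exactly once.  Domination of 0 and then of each 4j+4 forces all
   4j+1 into the set and hence all 4j+3 out of it; domination of 4j+3 then makes
   the j with 4j+2 in the set an initial segment [0, t).  So the gamma_t-sets
   are exactly the sets [gamma_set _ t] with t <= k+1, and TDV(v) counts the t
   for which v lies in [gamma_set _ t]. *)

Lemma div4_block j r : r < 4 -> (4 * j + r) %/ 4 = j.
Proof. lia. Qed.

Lemma mod4_block j r : r < 4 -> (4 * j + r) %% 4 = r.
Proof. lia. Qed.

Lemma mod4_cases i : exists j r, r < 4 /\ i = 4 * j + r.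
Proof. by exists (i %/ 4), (i %% 4); split; [rewrite ltn_pmod | lia]. Qed.

Definition gamma_pattern (t i : nat) : bool :=
  match i %% 4 with
  | 0 => t <= i %/ 4
  | 1 => true
  | 2 => i %/ 4 < t
  | _ => false
  end.

Lemma gamma_pattern_block t j r : r < 4 ->
  gamma_pattern t (4 * j + r) =
    match r with 0 => t <= j | 1 => true | 2 => j < t | _ => false end.
Proof. by move=> r4; rewrite /gamma_pattern mod4_block // div4_block. Qed.

Lemma sum_nat_ge_eq (f : nat -> nat) a m :
  (forall j, j < m -> a <= f j) -> \sum_(0 <= j < m) f j <= m * a ->
  forall j, j < m -> f j = a.
Proof.
move=> f_ge sum_le j jm.
have sum_split : \sum_(0 <= j < m) f j = m * a + \sum_(0 <= j < m) (f j - a).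
  have -> : m * a = \sum_(0 <= j < m) a by rewrite sum_nat_const_nat subn0.
  rewrite -big_split /=.
  by apply: eq_big_nat => i /andP[_ im]; rewrite subnKC ?f_ge.
have : \sum_(0 <= j < m) (f j - a) = 0.
  by apply/eqP; move: sum_le; rewrite sum_split -[X in _ <= X]addn0 leq_add2l leqn0.
rewrite (big_cat_nat _ (n := j)) //= ?(big_ltn jm); last lia.
by move=> sum0; have := f_ge j jm; lia.
Qed.

Lemma antitone_bool_prefix (c : nat -> bool) n :
  (forall j, j < n -> c j.+1 -> c j) ->
  exists2 t, t <= n.+1 & forall j, j <= n -> c j = (j < t).
Proof.
elim: n => [_|n IHn c_anti].
  by exists (c 0) => [|j]; [case: (c 0) | rewrite leqn0 => /eqP->; case: (c 0)].
have [t tn ct] : exists2 t, t <= n.+1 & forall j, j <= n -> c j = (j < t).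
  by apply: IHn => j jn; apply: c_anti; lia.
case cn1: (c n.+1).
  have tE : t = n.+1 by have := c_anti n (ltnSn n) cn1; rewrite ct //; lia.
  exists n.+2 => // j; rewrite leq_eqVlt => /predU1P[-> | jn]; first by rewrite cn1 ltnSn.
  by rewrite ct // tE jn ltnS ltnW.
exists t => [|j]; first exact: leqW.
rewrite leq_eqVlt => /predU1P[-> | jn]; last by rewrite ct.
by rewrite cn1 ltnNge tn.
Qed.

Definition block4 (d : nat -> bool) (j : nat) : nat :=
  d (4 * j) + d (4 * j + 1) + d (4 * j + 2) + d (4 * j + 3).

Lemma sum_block4 (d : nat -> bool) m :
  \sum_(0 <= i < 4 * m) d i = \sum_(0 <= j < m) block4 d j.
Proof.
elim: m => [|m IHm]; first by rewrite !big_geq.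
rewrite [RHS]big_nat_recr //= -IHm /block4.
have -> : 4 * m.+1 = (4 * m).+4 by lia.
by rewrite !big_nat_recr //= addn1 addn2 addn3 !addnA.
Qed.

Definition path_tds (n : nat) (d : nat -> bool) : Prop :=
  forall i, i < n -> (0 < i) && d i.-1 || d i.+1.

Lemma path_tds_first {n d} : path_tds n d -> 0 < n -> d 1.
Proof. by move=> dom /dom. Qed.

Lemma path_tds_inner {n d} : path_tds n d -> forall i, i + 1 < n -> d i || d (i + 2).
Proof. by move=> dom i /dom; rewrite addn1 addn2. Qed.

Lemma eq_path_tds {n} d d' :
  (forall i, i <= n -> d i = d' i) -> path_tds n d -> path_tds n d'.
Proof.
move=> dd' dom i ilt; rewrite -!dd' //; [exact: dom | lia].
Qed.

Section ExtremalPathTds.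
Variables (k : nat) (d : nat -> bool).
Hypothesis d_tds : path_tds (4 * k + 3) d.
Hypothesis d_end : d (4 * k + 3) = false.

Lemma sum_path_block4 : \sum_(0 <= i < 4 * k + 3) d i = \sum_(0 <= j < k.+1) block4 d j.
Proof.
rewrite -sum_block4 (_ : 4 * k.+1 = (4 * k + 3).+1); last lia.
by rewrite big_nat_recr //= d_end addn0.
Qed.

Lemma block4_pairs j : j <= k ->
  (d (4 * j) || d (4 * j + 2)) && (d (4 * j + 1) || d (4 * j + 3)).
Proof.
move=> jk; apply/andP; split; first by apply: (path_tds_inner d_tds); lia.
have inner : 4 * j + 1 + 1 < 4 * k + 3 by lia.
by move: (path_tds_inner d_tds _ inner); rewrite -addnA.
Qed.

Lemma block4_ge2 j : j <= k -> 2 <= block4 d j.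
Proof.
move=> /block4_pairs; rewrite /block4.
by case: (d (4 * j)); case: (d (4 * j + 1)); case: (d (4 * j + 2)); case: (d (4 * j + 3)).
Qed.

Lemma path_tds_sum_ge : 2 * k + 2 <= \sum_(0 <= i < 4 * k + 3) d i.
Proof.
rewrite sum_path_block4 (_ : 2 * k + 2 = \sum_(0 <= j < k.+1) 2).
  by rewrite !big_mkord; apply: leq_sum => j _; apply: block4_ge2; rewrite -ltnS.
by rewrite sum_nat_const_nat; lia.
Qed.

Hypothesis d_min : \sum_(0 <= i < 4 * k + 3) d i <= 2 * k + 2.

Lemma block4_eq2 j : j <= k -> block4 d j = 2.
Proof.
apply: (sum_nat_ge_eq _ _ k.+1) => [i|]; first exact: block4_ge2.
by rewrite -sum_path_block4; lia.
Qed.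

Lemma block4_exact j : j <= k -> d (4 * j) = ~~ d (4 * j + 2) /\ d (4 * j + 3) = ~~ d (4 * j + 1).
Proof.
move=> jk; move: (block4_pairs _ jk) (block4_eq2 _ jk); rewrite /block4.
by case: (d (4 * j)); case: (d (4 * j + 1)); case: (d (4 * j + 2)); case: (d (4 * j + 3)).
Qed.

Lemma extremal_block1 j : j <= k -> d (4 * j + 1).
Proof.
elim: j => [_|j IHj jk]; first by apply: (path_tds_first d_tds); rewrite addn3.
have [_ d3] := block4_exact j (ltnW jk).
have inner : 4 * j + 3 + 1 < 4 * k + 3 by lia.
move: (path_tds_inner d_tds _ inner).
by rewrite d3 IHj ?(ltnW jk) // (_ : 4 * j + 3 + 2 = 4 * j.+1 + 1); last lia.
Qed.

Lemma extremal_block3 j : j <= k -> d (4 * j + 3) = false.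
Proof. by move=> jk; rewrite (block4_exact _ jk).2 extremal_block1. Qed.

Lemma extremal_block2_antitone j : j < k -> d (4 * j.+1 + 2) -> d (4 * j + 2).
Proof.
move=> jk; have inner : 4 * j + 2 + 1 < 4 * k + 3 by lia.
move: (path_tds_inner d_tds _ inner); rewrite (_ : 4 * j + 2 + 2 = 4 * j.+1); last lia.
by rewrite (block4_exact j.+1 jk).1 => /orP[// | /negbTE ->].
Qed.

Lemma extremal_path_tds : exists2 t, t <= k.+1 & forall i, i < 4 * k + 3 -> d i = gamma_pattern t i.
Proof.
have [t tk dt] := antitone_bool_prefix (fun j => d (4 * j + 2)) k extremal_block2_antitone.
exists t => // i ilt; have [j [r [r4 iE]]] := mod4_cases i.
rewrite iE gamma_pattern_block //; have jk : j <= k by lia.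
case: r r4 iE => [|[|[|[|r]]]] // _ iE /=.
- by rewrite addn0 (block4_exact _ jk).1 dt // -leqNgt.
- exact: extremal_block1.
- exact: dt.
- by apply: extremal_block3; lia.
Qed.

End ExtremalPathTds.

Lemma gamma_pattern_tds t n : path_tds n (gamma_pattern t).
Proof.
move=> i _; have [j [r [r4 ->]]] := mod4_cases i.
case: r r4 => [|[|[|[|r]]]] // _.
- have -> : (4 * j + 0).+1 = 4 * j + 1 by lia.
  by rewrite gamma_pattern_block ?orbT.
- have -> : (4 * j + 1).-1 = 4 * j + 0 by lia.
  have -> : (4 * j + 1).+1 = 4 * j + 2 by lia.
  by rewrite !gamma_pattern_block // addn1 /= leqNgt orNb.
- have -> : (4 * j + 2).-1 = 4 * j + 1 by lia.
  by rewrite gamma_pattern_block // addn2.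
- have -> : (4 * j + 3).-1 = 4 * j + 2 by lia.
  have -> : (4 * j + 3).+1 = 4 * j.+1 + 0 by lia.
  by rewrite !gamma_pattern_block // addn3 /=; case: (ltnP j t) => // /leqW.
Qed.

Definition nat_mem {n} (D : {set 'I_n}) (i : nat) : bool := [exists u in D, val u == i].

Lemma nat_mem_ord n (D : {set 'I_n}) (o : 'I_n) : nat_mem D o = (o \in D).
Proof.
apply/existsP/idP => [[u /andP[uD /eqP/val_inj <-]] // | oD].
by exists o; rewrite oD eqxx.
Qed.

Lemma nat_mem_out n (D : {set 'I_n}) i : n <= i -> nat_mem D i = false.
Proof.
by move=> ni; apply/existsP => [[u /andP[_ /eqP uE]]]; move: ni; rewrite -uE leqNgt ltn_ord.
Qed.

Lemma card_nat_mem n (D : {set 'I_n}) : #|D| = \sum_(0 <= i < n) nat_mem D i.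
Proof.
rewrite -sum1_card big_mkcond big_mkord /=.
by apply: eq_bigr => o _; rewrite nat_mem_ord; case: (o \in D).
Qed.

Lemma total_dominating_path n (D : {set 'I_n}) :
  total_dominating (path_adj n) D <-> path_tds n (nat_mem D).
Proof.
split => [/forallP D_tds i ilt | D_tds].
  have /existsP [u /andP [uD /orP [/eqP uE | /eqP /= uE]]] := D_tds (Ordinal ilt).
    by apply/orP; right; apply/existsP; exists u; rewrite uD; apply/eqP; exact: esym uE.
  by apply/orP; left; rewrite -uE /=; apply/existsP; exists u; rewrite uD eqxx.
apply/forallP => o; have := D_tds o (ltn_ord o).
case/orP => [/andP [o_gt0 /existsP [u /andP [uD /eqP uE]]] | /existsP [u /andP [uD /eqP uE]]];
  apply/existsP; exists u; rewrite uD /path_adj uE ?eqxx //.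
by rewrite prednK // eqxx orbT.
Qed.

Definition gamma_set n t : {set 'I_n} := [set o : 'I_n | gamma_pattern t o].

Lemma nat_mem_gamma_set k t i :
  i <= 4 * k + 3 -> nat_mem (gamma_set (4 * k + 3) t) i = gamma_pattern t i.
Proof.
rewrite leq_eqVlt => /predU1P [-> | ilt]; last by rewrite (nat_mem_ord _ _ (Ordinal ilt)) inE.
by rewrite nat_mem_out // gamma_pattern_block.
Qed.

Lemma gamma_set_tds k t : total_dominating (path_adj (4 * k + 3)) (gamma_set _ t).
Proof.
apply/total_dominating_path; apply: (eq_path_tds (gamma_pattern t)); last exact: gamma_pattern_tds.
by move=> i /nat_mem_gamma_set ->.
Qed.

Lemma card_gamma_set k t : #|gamma_set (4 * k + 3) t| = 2 * k + 2.
Proof.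
have end_out : gamma_pattern t (4 * k + 3) = false by rewrite gamma_pattern_block.
rewrite card_nat_mem (eq_big_nat _ _ (F2 := fun i => nat_of_bool (gamma_pattern t i))); last first.
  by move=> i /andP [_ /ltnW /nat_mem_gamma_set ->].
rewrite (sum_path_block4 k _ end_out) (eq_big_nat _ _ (F2 := fun => 2)).
  by rewrite sum_nat_const_nat; lia.
move=> j _; rewrite /block4 -{1}[4 * j]addn0 !gamma_pattern_block //=.
by case: leqP.
Qed.

Lemma tds_path_card_ge k (E : {set 'I_(4 * k + 3)}) :
  total_dominating (path_adj _) E -> 2 * k + 2 <= #|E|.
Proof.
move=> /total_dominating_path E_tds; rewrite card_nat_mem.
exact: (path_tds_sum_ge _ _ E_tds (nat_mem_out _ _ _ (leqnn _))).
Qed.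

Lemma min_tds_path k (D : {set 'I_(4 * k + 3)}) :
  min_tds (path_adj _) D <-> exists2 t, t <= k.+1 & D = gamma_set _ t.
Proof.
split => [/andP [D_tds /forallP D_min] | [t _ ->]]; last first.
  rewrite /min_tds gamma_set_tds card_gamma_set /=.
  by apply/forallP => E; apply/implyP; apply: tds_path_card_ge.
have D_le : #|D| <= 2 * k + 2.
  by rewrite -(card_gamma_set k 0); apply: (implyP (D_min _)); apply: gamma_set_tds.
move/total_dominating_path: D_tds => D_tds; rewrite card_nat_mem in D_le.
have [t tk Dt] := extremal_path_tds _ _ D_tds (nat_mem_out _ _ _ (leqnn _)) D_le.
by exists t => //; apply/setP => o; rewrite inE -nat_mem_ord; apply: Dt.
Qed.

Lemma gamma_set_inj k : injective (fun t : 'I_k.+2 => gamma_set (4 * k + 3) t).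
Proof.
suff sep a b : a < b -> b < k.+2 -> gamma_set (4 * k + 3) a <> gamma_set _ b.
  move=> a b ab; apply: val_inj; case: (ltngtP a b) => // [lt | gt].
    by case: (sep _ _ lt (ltn_ord b)).
  by case: (sep _ _ gt (ltn_ord a)).
move=> ab bk abE; have a2 : 4 * a + 2 < 4 * k + 3 by lia.
have := congr1 (fun D : {set 'I_(4 * k + 3)} => Ordinal a2 \in D) abE.
by rewrite !inE -[nat_of_ord _]/(4 * a + 2) !gamma_pattern_block // ab ltnn.
Qed.

Lemma card_min_tds_path k (P : pred {set 'I_(4 * k + 3)}) :
  #|[set D | min_tds (path_adj _) D && P D]| = #|[set t : 'I_k.+2 | P (gamma_set _ t)]|.
Proof.
rewrite -[RHS](card_imset _ (gamma_set_inj k)); apply: eq_card => D; rewrite inE.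
apply/andP/imsetP => [[/min_tds_path [t tk ->] Pt] | [t]].
  by exists (Ordinal (tk : t < k.+2)); first rewrite inE.
rewrite inE => Pt ->; split; last exact: Pt.
by apply/min_tds_path; exists t; first by rewrite -ltnS.
Qed.

Lemma card_ord_le m s : s <= m -> #|[set t : 'I_m.+1 | t <= s]| = s.+1.
Proof.
move=> sm; rewrite -sum1_card.
under eq_bigl => t do rewrite inE.
by rewrite (big_ord_narrow_leq sm) big_const_ord iter_addn_0 mul1n.
Qed.

Lemma card_ord_gt m s : s <= m -> #|[set t : 'I_m.+1 | s < t]| = m - s.
Proof.
move=> sm; have := cardsC [set t : 'I_m.+1 | t <= s].
rewrite card_ord card_ord_le // (_ : ~: _ = [set t : 'I_m.+1 | s < t]); first lia.
by apply/setP => t; rewrite !inE ltnNge.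
Qed.

Lemma tau_path k : tau (path_adj (4 * k + 3)) = k.+2.
Proof.
rewrite /tau; transitivity #|[set D | min_tds (path_adj (4 * k + 3)) D && predT D]|.
  by apply: eq_card => D; rewrite !inE andbT.
rewrite card_min_tds_path -[RHS](card_ord k.+2) -cardsT.
by apply: eq_card => t; rewrite !inE.
Qed.

Lemma TDV_path k (v : 'I_(4 * k + 3)) :
  TDV (path_adj _) v = #|[set t : 'I_k.+2 | gamma_pattern t v]|.
Proof.
rewrite /TDV (card_min_tds_path k (fun D => v \in D)).
by apply: eq_card => t; rewrite !inE.
Qed.

Theorem proposition5p5 (k : nat) :
  tau (path_adj (4 * k + 3)) = k + 2 /\
  forall v : 'I_(4 * k + 3),
    let lab := (v : nat).+1 in
    let q := lab %/ 4 in
    TDV (path_adj (4 * k + 3)) v =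
      match lab %% 4 with
      | 0 => 0
      | 1 => q + 1
      | 2 => k + 2
      | _ => k + 1 - q
      end.
Proof.
split=> [|v /=]; first by rewrite tau_path addn2.
rewrite TDV_path; have [j [r [r4 vE]]] := mod4_cases v.
have jk : j <= k by move: (ltn_ord v); lia.
rewrite {}vE; under eq_finset => t do rewrite gamma_pattern_block //.
case: r r4 => [|[|[|[|r]]]] // _.
- by rewrite -addnS mod4_block // div4_block // (card_ord_le _ _ (leqW jk)) addn1.
- by rewrite -addnS mod4_block // cardsT card_ord addn2.
- by rewrite -addnS mod4_block // div4_block // (card_ord_gt _ _ (leqW jk)) addn1.
- by rewrite (_ : (4 * j + 3).+1 = 4 * j.+1 + 0) ?mod4_block ?cards0 //; lia.
Qed.
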